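(* Let $n\ge 1$, $y\in\mathbb{R}^n$ and $\omega\in\mathbb{R}^n$ with $\omega_i>0$ for all $i$. Consider the isotonic regression problem $$\min_{\theta\in\mathbb{R}^n}\ \tfrac12\sum_{i=1}^n \omega_i(y_i-\theta_i)^2\quad\text{subject to}\quad \theta_1\le\theta_2\le\cdots\le\theta_n. \tag{IR}$$ If the PDAS algorithm for isotonic regression (described in the context below) is applied to (IR) from an arbitrary initial partition $J_0$, then it terminates and returns the optimal solution of (IR), using $\mathcal{O}(n)$ elementary arithmetic operations in total.
   Context: A partition $J$ of $\{1,\dots,n\}$ is a collection of ordered blocks $B_1,B_2,\dots$, each consisting of consecutive indices $\{p,p+1,\dots,q\}$ with $p\le q$, listed from left to right. For a block $B$, $B_-$ (resp. $B_+$) denotes its immediate predecessor (resp. successor) block, taken to be $\emptyset$ if $B$ is the first (resp. last) block. For $i\in B=\{p,\dots,q\}\in J$, set $L_i=\{p,\dots,i\}$ and $U_i=\{i+1,\dots,q\}$. PDAS algorithm for isotonic regression: (1) Input an arbitrary initial partition $J_0$. For each block $B=\{p,\dots,q\}\in J_0$ and each $i\in B$, set $\theta_i=\big(\sum_{j\in B}\omega_jy_j\big)/\big(\sum_{j\in B}\omega_j\big)$, and define $z_i$ by: $z_i=\omega_i(y_i-\theta_i)$ if $i=p$; $z_i=0$ if $i=q\ne n$; $z_i=z_{i-1}+\omega_i(y_i-\theta_i)$ otherwise. (2) Set $J_1=J_0$, and for each index $i$ with $z_i<0$, split the block $B\in J_1$ containing $i$ into the two blocks $L_i$ and $U_i$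 (so each block of $J_0$ is cut immediately after every such index $i$). (3) For each $B\in J_1$ set $\alpha_B=\sum_{i\in B}\omega_iy_i$, $\beta_B=\sum_{i\in B}\omega_i$, $\mu_B=\alpha_B/\beta_B$. (4) For $k=1,2,\dots$: initialize $J_{k+1}=J_k$; for every maximal run of consecutive blocks $B_s,B_{s+1},\dots,B_t$ of $J_k$ (with $t>s$) satisfying $\mu_{B_{s-1}}\le\mu_{B_s}>\mu_{B_{s+1}}>\cdots>\mu_{B_t}\le\mu_{B_{t+1}}$ (conditions involving a nonexistent block $B_{s-1}$ or $B_{t+1}$ being dropped), replace $B_s,\dots,B_t$ in $J_{k+1}$ by the single merged block $N=\bigcup_{j=s}^tB_j$, with $\alpha_N=\sum_{j=s}^t\alpha_{B_j}$, $\beta_N=\sum_{j=s}^t\beta_{B_j}$, $\mu_N=\alpha_N/\beta_N$. If $J_{k+1}=J_k$, stop. (5) Output $\theta$ given by $\theta_i=\mu_B$ for every $i\in B$ and every block $B$ of the final partition. *)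

(* the algorithm is purely algebraic/order-theoretic, so it is
   stated over an arbitrary real field R (this covers the real numbers). *)
From HB Require Import structures.
From mathcomp Require Import all_boot all_order all_algebra.
Set Implicit Arguments.
Unset Strict Implicit.
Unset Printing Implicit Defensive.
Import Order.TTheory GRing.Theory Num.Theory.
Local Open Scope ring_scope.

(* Indices are 0-based: the paper's index i corresponds to i-1 here, so the
   index set is {0,...,n-1}.  A block {p,...,q} is the pair (p,q).            *)

Fixpoint valid_from (k n : nat) (J : seq (nat * nat)) : bool :=
  match J with
  | [::] => k == n
  | (p, q) :: J' => [&& p == k, (p <= q)%N & valid_from q.+1 n J']
  end.

Definition is_partition (n : nat) (J : seq (nat * nat)) : bool := valid_from 0 n J.

Definition ir_obj (R : realFieldType) (n : nat) (y w th : nat -> R) : R :=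
  (\sum_(i < n) w i * (y i - th i) ^+ 2) / 2.

Definition monotone (R : realFieldType) (n : nat) (th : nat -> R) : Prop :=
  forall i : nat, (i.+1 < n)%N -> th i <= th i.+1.

Section PDAS.
Variable R : realFieldType.
Variables (n : nat) (y w : nat -> R).

Definition bsum (p q : nat) (f : nat -> R) : R := \sum_(p <= j < q.+1) f j.

Definition theta0 (B : nat * nat) : R :=
  bsum B.1 B.2 (fun j => w j * y j) / bsum B.1 B.2 w.

Definition zval (B : nat * nat) (i : nat) : R :=
  if (i == B.2) && (B.2 != n.-1)%N then 0
  else \sum_(B.1 <= j < i.+1) w j * (y j - theta0 B).

(* Step (2): cut a block {p..q} immediately after each index i (p <= i < q)
   with c i; cutting after q would leave an empty U_q, so nothing happens. *)
Fixpoint cutb (c : nat -> bool) (s q : nat) (idx : seq nat) : seq (nat * nat) :=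
  match idx with
  | [::] => [:: (s, q)]
  | i :: idx' => if c i then (s, i) :: cutb c i.+1 q idx' else cutb c s q idx'
  end.

Definition cut_block (B : nat * nat) : seq (nat * nat) :=
  cutb (fun i => zval B i < 0) B.1 B.2 (iota B.1 (B.2 - B.1)).

Definition J1 (J0 : seq (nat * nat)) : seq (nat * nat) := flatten (map cut_block J0).

Record blk := Blk { bp : nat; bq : nat; ba : R; bb : R }.

Definition mu (b : blk) : R := ba b / bb b.

Definition init_blk (B : nat * nat) : blk :=
  Blk B.1 B.2 (bsum B.1 B.2 (fun j => w j * y j)) (bsum B.1 B.2 w).

Fixpoint runs (l : seq blk) : seq (seq blk) :=
  match l with
  | [::] => [::]
  | b :: l' =>
      match runs l' with
      | (c :: r) :: gs =>
          if mu c < mu b then (b :: c :: r) :: gs else [:: b] :: (c :: r) :: gs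
      | gs => [:: b] :: gs
      end
  end.

Definition merge_run (r : seq blk) : blk :=
  match r with
  | [::] => Blk 0 0 0 1
  | [:: b] => b
  | b :: r' => Blk (bp b) (bq (last b r')) (\sum_(c <- r) ba c) (\sum_(c <- r) bb c)
  end.

Definition pdas_step (J : seq blk) : seq blk := map merge_run (runs J).

(* J_{k+1} (k >= 0):  Jk J0 k is the partition J_{k+1} of the paper. *)
Definition Jk (J0 : seq (nat * nat)) (k : nat) : seq blk :=
  iter k pdas_step (map init_blk (J1 J0)).

Definition parts (J : seq blk) : seq (nat * nat) := map (fun b => (bp b, bq b)) J.

Fixpoint theta_of (J : seq blk) (i : nat) : R :=
  match J with
  | [::] => 0
  | b :: J' => if (i <= bq b)%N then mu b else theta_of J' i
  end.

(* Cost model: number of elementary arithmetic operations (+, -, *, /). *)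
(* Step (1) on a block of length L: alpha (L mult, L-1 add), beta (L-1 add),
   theta (1 div), z (L sub, L mult, L-1 add). *)
Definition cost1_block (B : nat * nat) : nat :=
  let L := (B.2 - B.1).+1 in (L + L.-1 + L.-1 + 1 + (L + L + L.-1))%N.
(* Step (3) on a block of length L: alpha, beta, mu. *)
Definition cost3_block (B : nat * nat) : nat :=
  let L := (B.2 - B.1).+1 in (L + L.-1 + L.-1 + 1)%N.
(* Step (4): merging a run of m >= 2 blocks: (m-1) adds for alpha_N, (m-1) for
   beta_N, 1 division for mu_N. *)
Definition cost_run (r : seq blk) : nat :=
  if (2 <= size r)%N then ((size r).-1 + (size r).-1 + 1)%N else 0%N.
Definition cost_step (J : seq blk) : nat := sumn (map cost_run (runs J)).

(* Total cost when the loop stops at the iteration producing J_{K+1} = Jk K. *)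
Definition total_cost (J0 : seq (nat * nat)) (K : nat) : nat :=
  (sumn (map cost1_block J0) + sumn (map cost3_block (J1 J0))
   + \sum_(k < K.+1) cost_step (Jk J0 k))%N.

End PDAS.

From HB Require Import structures.
From mathcomp Require Import all_boot all_order all_algebra.
From mathcomp Require Import zify ring lra.
From Stdlib Require List.
Import Order.TTheory GRing.Theory Num.Theory.
Set Implicit Arguments.
Unset Strict Implicit.
Unset Printing Implicit Defensive.
Local Open Scope ring_scope.

(* Call a block {s..e} admissible if every prefix {s..c} has weighted mean at
   least the mean of the whole block, i.e. the partial sums of w_j (y_j - mu)
   over the block are nonnegative.  Step (2) cuts each block of J0 exactly
   where these partial sums turn negative, so every block of J1 is admissible,
   and merging a strictly decreasing run of admissible blocks gives an
   admissible block.  Each non-final iteration lowers the number of blocks and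
   costs at most three operations per block removed, so the loop stops after
   O(n) work.  At that point the block means are nondecreasing, so theta is
   feasible, and the partial residual sums are nonnegative multipliers that
   vanish unless the corresponding constraint is tight; summation by parts
   turns these KKT conditions into optimality. *)

Lemma valid_from_le k m P : valid_from k m P -> (k <= m)%N.
Proof.
elim: P k => [|[p q] P IH] k /=; first by move/eqP->.
by case/and3P=> /eqP-> pq /IH; lia.
Qed.

Lemma valid_from_cat k m n A B :
  valid_from k m A -> valid_from m n B -> valid_from k n (A ++ B).
Proof.
elim: A k => [|[p q] A IH] k /=; first by move/eqP->.
by case/and3P=> -> -> /IH H /H ->.
Qed.

Lemma valid_from_catP k n A B :
  valid_from k n (A ++ B) -> exists2 m, valid_from k m A & valid_from m n B.
Proof.
elim: A k => [|[p q] A IH] k /=; first by exists k.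
by case/and3P=> -> -> /IH [m H1 H2]; exists m; rewrite ?H1.
Qed.

Lemma size_valid_from k n P : valid_from k n P -> (size P <= n - k)%N.
Proof.
elim: P k => [|[p q] P IH] k //=.
by case/and3P=> /eqP-> pq H; have := IH _ H; have := valid_from_le H; lia.
Qed.

Lemma sumn_valid_from a (c : nat * nat -> nat) k n P :
  (forall B, (B.1 <= B.2)%N -> (c B <= a * (B.2 - B.1).+1)%N) ->
  valid_from k n P -> (sumn (map c P) <= a * (n - k))%N.
Proof.
move=> Hc; elim: P k => [|[p q] P IH] k /=; first by move/eqP->; rewrite subnn.
case/and3P=> /eqP Hp pq H; have := IH _ H; have := valid_from_le H.
by have := Hc (p, q) pq; rewrite /=; nia.
Qed.

Section Runs.
Variable R : realFieldType.
Implicit Types (b c : blk R) (l : seq (blk R)).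

Definition mu_drop (b c : blk R) : bool := mu c < mu b.

Definition decreasing_run (r : seq (blk R)) : bool :=
  if r is b :: r' then path mu_drop b r' else false.

Lemma runs_cons b l : exists r gs, runs (b :: l) = (b :: r) :: gs.
Proof.
rewrite /=; case: (runs l) => [|[|c r] gs]; try by do 2 eexists.
by case: ifP => _; do 2 eexists.
Qed.

Lemma flatten_runs l : flatten (runs l) = l.
Proof.
elim: l => //= b l; case: l => [|c l] // IH.
have [r [gs E]] := runs_cons c l.
by rewrite E in IH *; case: ifP; rewrite /= -IH.
Qed.

Lemma all_decreasing_runs l : all decreasing_run (runs l).
Proof.
elim: l => //= b l; case: l => [|c l] // IH.
have [r [gs E]] := runs_cons c l.
by rewrite E in IH *; case: ifP => /= drop_bc //; rewrite [mu_drop _ _]drop_bc.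
Qed.

Lemma size_runs l : (size (runs l) <= size l)%N.
Proof.
elim: l => //= b l; case: l => [|c l] // IH.
have [r [gs E]] := runs_cons c l.
by rewrite E in IH *; case: ifP => _ /=; rewrite /= in IH; lia.
Qed.

Lemma runs_fixpoint l : size (runs l) = size l ->
  pdas_step l = l /\ sorted (fun b c => mu b <= mu c) l.
Proof.
rewrite /pdas_step; elim: l => //= b l; case: l => [|c l] // IH.
have [r [gs E]] := runs_cons c l.
rewrite E in IH *; case: ifP => drop_bc /=.
  by move=> Hs; have := size_runs (c :: l); rewrite E /=; lia.
case=> /(congr1 S)/IH[/= -> IH2]; split => //.
by rewrite /= leNgt drop_bc.
Qed.

(* Merging a run of m blocks costs 2m - 1 <= 3(m - 1) operations for m >= 2. *)
Lemma cost_step_runs l : (cost_step l + 3 * size (runs l) <= 3 * size l)%N.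
Proof.
rewrite /cost_step; elim: l => //= b l; case: l => [|c l] // IH.
have [r [gs E]] := runs_cons c l.
rewrite E in IH *; case: ifP => _ /=; rewrite /= in IH; last first.
  by rewrite [cost_run [:: b]]/cost_run /=; lia.
by move: IH; rewrite /cost_run /=; case: r {E} => [|d r] /=; lia.
Qed.

Lemma pdas_terminates l : exists K,
  [/\ forall k, (k < K)%N ->
        parts (pdas_step (iter k (@pdas_step R) l)) <> parts (iter k (@pdas_step R) l),
      parts (pdas_step (iter K (@pdas_step R) l)) = parts (iter K (@pdas_step R) l)
    & (\sum_(k < K.+1) cost_step (iter k (@pdas_step R) l) <= 3 * size l)%N].
Proof.
move: {2}(size l) (leqnn (size l)) => m; elim: m l => [|m IH] l Hl.
  by case: l Hl => // _; exists 0%N; split => //; rewrite big_ord_recl big_ord0.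
have Hcost := cost_step_runs l.
have Hsz : size (pdas_step l) = size (runs l) by rewrite size_map.
have [Hfix|Hmove] := eqVneq (parts (pdas_step l)) (parts l).
  exists 0%N; split => //; rewrite big_ord_recl big_ord0 /= addn0.
  suff : size (runs l) = size l by lia.
  by rewrite -Hsz -(size_map (fun b => (bp b, bq b))) -/(parts _) Hfix size_map.
have Hlt : (size (runs l) < size l)%N.
  by rewrite ltn_neqAle size_runs andbT; apply: contra_neq Hmove => /runs_fixpoint[->].
have [|K [H1 H2 H3]] := IH (pdas_step l); first by rewrite Hsz; lia.
exists K.+1; split; first by case=> [_|k Hk]; [exact/eqP | rewrite iterSr; apply: H1].
  by rewrite iterSr.
rewrite big_ord_recl /=.
under eq_bigr => i _ do rewrite add0n -iterS iterSr.
by apply: leq_trans Hcost; rewrite leq_add2l -Hsz.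
Qed.
End Runs.

Arguments mu_drop {R}.
Arguments decreasing_run {R}.

Lemma abel_summation_le (R : realDomainType) (d u : nat -> R) m :
  (forall i, (i < m)%N -> 0 <= \sum_(0 <= j < i.+1) d j /\
     (\sum_(0 <= j < i.+1) d j = 0 \/ u i <= u i.+1)) ->
  \sum_(0 <= j < m.+1) d j * u j <= (\sum_(0 <= j < m.+1) d j) * u m.
Proof.
elim: m => [|m IH] H; first by rewrite !big_nat1.
rewrite !(@big_nat_recr _ _ _ m.+1 0) //= mulrDl lerD2r.
apply: le_trans (IH (fun i Hi => H i (leqW Hi))) _.
by have [D0 [->|Hu]] := H m (ltnSn m); [rewrite !mul0r | exact: ler_wpM2l].
Qed.

Section Isotonic.
Variable R : realFieldType.
Variables (n : nat) (y w : nat -> R).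
Hypothesis w_gt0 : forall i, (i < n)%N -> 0 < w i.

Definition psum (f : nat -> R) k := \sum_(0 <= j < k) f j.
Definition alpha s e := psum (fun j => w j * y j) e.+1 - psum (fun j => w j * y j) s.
Definition beta s e := psum w e.+1 - psum w s.

(* The mean of {s..c} is at least the mean of {s..e}, cross-multiplied. *)
Definition admissible s e := forall c, (s <= c <= e)%N ->
  alpha s e * beta s c <= beta s e * alpha s c.

Definition blk_ok (b : blk R) := [/\ ba b = alpha (bp b) (bq b),
  bb b = beta (bp b) (bq b) & admissible (bp b) (bq b)].

Lemma alpha_split s m e : alpha s e = alpha s m + alpha m.+1 e.
Proof. by rewrite /alpha; ring. Qed.

Lemma beta_split s m e : beta s e = beta s m + beta m.+1 e.
Proof. by rewrite /beta; ring. Qed.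

Lemma bsum_psum f p q : (p <= q.+1)%N -> bsum p q f = psum f q.+1 - psum f p.
Proof.
by move=> H; rewrite /bsum /psum (@big_cat_nat _ _ _ p 0 q.+1 _ _ (leq0n p) H) /= addrC addrK.
Qed.

Lemma residual_sum p c t : (p <= c.+1)%N ->
  \sum_(p <= j < c.+1) w j * (y j - t) = alpha p c - t * beta p c.
Proof.
move=> H; under eq_bigr => j _ do rewrite mulrBr [w j * t]mulrC.
by rewrite sumrB -mulr_sumr -/(bsum p c (fun j => w j * y j)) -/(bsum p c w) !bsum_psum.
Qed.

Lemma beta_ge0 s e : (s <= e.+1)%N -> (e < n)%N -> 0 <= beta s e.
Proof.
move=> Hs He; rewrite /beta -bsum_psum // /bsum big_nat_cond.
apply: sumr_ge0 => j /andP[/andP[_ Hj] _].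
by apply/ltW/w_gt0; apply: leq_trans Hj He.
Qed.

Lemma beta_gt0 s e : (s <= e)%N -> (e < n)%N -> 0 < beta s e.
Proof.
move=> Hs He; rewrite /beta -bsum_psum ?(leqW Hs) // /bsum big_nat_recr //=.
rewrite ltr_wpDl ?w_gt0 // big_nat_cond sumr_ge0 // => j /andP[/andP[_ Hj] _].
by apply/ltW/w_gt0; apply: ltn_trans Hj He.
Qed.

Lemma beta_le s c e : (c <= e)%N -> (e < n)%N -> beta s c <= beta s e.
Proof. by move=> Hc He; rewrite (beta_split s c e) lerDl beta_ge0. Qed.

Lemma admissible_cat s m e : (s <= m)%N -> (m < e)%N -> (e < n)%N ->
  admissible s m -> admissible m.+1 e ->
  alpha m.+1 e * beta s m <= alpha s m * beta m.+1 e -> admissible s e.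
Proof.
move=> Hsm Hme Hen Hl Hr Hmeans c /andP[Hsc Hce].
have b1 : 0 < beta s m by apply: beta_gt0; lia.
have b2 : 0 < beta m.+1 e by apply: beta_gt0; lia.
rewrite (alpha_split s m e) (beta_split s m e).
have [Hcm|Hmc] := leqP c m.
  have Hc : alpha s m * beta s c <= beta s m * alpha s c by apply: Hl; rewrite Hsc Hcm.
  have : 0 <= beta s c by apply: beta_ge0; lia.
  nra.
rewrite (alpha_split s m c) (beta_split s m c).
have Hc : alpha m.+1 e * beta m.+1 c <= beta m.+1 e * alpha m.+1 c by apply: Hr; rewrite Hmc.
have : beta m.+1 c <= beta m.+1 e by apply: beta_le.
nra.
Qed.

Lemma mu_ltE (b c : blk R) : 0 < bb b -> 0 < bb c ->
  (mu c < mu b) = (ba c * bb b < ba b * bb c).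
Proof. by move=> Hb Hc; rewrite /mu ltr_pdivrMr // mulrAC ltr_pdivlMr. Qed.

Lemma decreasing_run_ok b r k e :
  valid_from k e.+1 (parts (b :: r)) -> (e < n)%N ->
  List.Forall blk_ok (b :: r) -> path mu_drop b r ->
  [/\ bp b = k, bq (last b r) = e, (k <= e)%N,
      \sum_(c <- b :: r) ba c = alpha k e /\ \sum_(c <- b :: r) bb c = beta k e
    & admissible k e /\ alpha k e * bb b <= ba b * beta k e].
Proof.
elim: r b k => [|c r IH] b k /=.
  case/and3P=> /eqP Hk Hpq /eqP[He] Hen /List.Forall_cons_iff[[Ha Hb Hg] _] _.
  by rewrite !big_cons !big_nil !addr0 Ha Hb -Hk -He mulrC.
case/and3P=> /eqP Hk Hpq Hv Hen /List.Forall_cons_iff[[Ha Hb Hg] Hok] /andP[Hd Hp].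
have [Hc He Hce [Sa Sb] [Hadm Hmean]] := IH c _ Hv Hen Hok Hp.
have /List.Forall_cons_iff[[Hac Hbc _] _] := Hok.
have Pb : 0 < bb b by rewrite Hb; apply: beta_gt0; lia.
have /= /and3P[_ Hcpq /valid_from_le Hcq] := Hv.
have Pc : 0 < bb c by rewrite Hbc; apply: beta_gt0 => //; lia.
have Pr : 0 < beta (bq b).+1 e by apply: beta_gt0.
move: Hd; rewrite /mu_drop mu_ltE // => Hd.
have Hmean' : alpha (bq b).+1 e * bb b <= ba b * beta (bq b).+1 e by nra.
subst k; split => //; first lia.
- by rewrite big_cons Sa big_cons Sb Ha Hb -alpha_split -beta_split.
- split; last by rewrite (alpha_split _ (bq b)) (beta_split _ (bq b)); nra.
  by apply: admissible_cat Hg Hadm _; rewrite // -?Ha -?Hb //; lia.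
Qed.

Lemma merge_run_ok b r k e :
  valid_from k e.+1 (parts (b :: r)) -> (e < n)%N ->
  List.Forall blk_ok (b :: r) -> path mu_drop b r ->
  [/\ blk_ok (merge_run (b :: r)), bp (merge_run (b :: r)) = k,
      bq (merge_run (b :: r)) = e & (k <= e)%N].
Proof.
move=> Hv He Hok Hp; have [Hk Hl Hke [Sa Sb] [Hadm _]] := decreasing_run_ok Hv He Hok Hp.
case: r Hok Hl Sa Sb {Hv Hp} => [|c r] /List.Forall_cons_iff[Hb _] Hl Sa Sb //.
by split; rewrite //= ?Hk ?Hl.
Qed.

Lemma merge_runs_ok gs k :
  valid_from k n (parts (flatten gs)) -> List.Forall blk_ok (flatten gs) ->
  all decreasing_run gs ->
  valid_from k n (parts (map (@merge_run R) gs)) /\ List.Forall blk_ok (map (@merge_run R) gs).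
Proof.
elim: gs k => [|r gs IH] k //=.
rewrite /parts map_cat -/(parts _) -/(parts _) => /valid_from_catP[m Hv1 Hv2].
case/List.Forall_app=> Ho1 Ho2 /andP[]; case: r Hv1 Ho1 => // b r Hv1 Ho1 Hp Hgs.
case: m Hv1 Hv2 => [|e] Hv1 Hv2; first by move: Hv1 => /= /and3P[_ _ /valid_from_le].
have [Hok Hbp Hbq Hke] := merge_run_ok Hv1 (valid_from_le Hv2) Ho1 Hp.
have [IH1 IH2] := IH _ Hv2 Ho2 Hgs.
by rewrite /= Hbp Hbq eqxx Hke IH1; split => //; constructor.
Qed.

Definition pdas_inv (J : seq (blk R)) := valid_from 0 n (parts J) /\ List.Forall blk_ok J.

Lemma pdas_inv_step J : pdas_inv J -> pdas_inv (pdas_step J).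
Proof.
rewrite /pdas_inv -{1 2}(flatten_runs J) => -[Hv Ho].
exact: merge_runs_ok Hv Ho (all_decreasing_runs J).
Qed.

Lemma pdas_inv_iter k J : pdas_inv J -> pdas_inv (iter k (@pdas_step R) J).
Proof. by move=> HJ; elim: k => //= k; apply: pdas_inv_step. Qed.

Section Cut.
Variables p q : nat.
Hypotheses (Hpq : (p <= q)%N) (Hqn : (q < n)%N).

Let t := theta0 y w (p, q).

(* [Z k.+1] is the paper's z_k, a partial sum of [w j (y j - t)] over
   [p <= j <= k]; the exclusive upper index gives [Z p = 0]. *)
Let Z k := psum (fun j => w j * y j) k - psum (fun j => w j * y j) p
           - t * (psum w k - psum w p).

Lemma Z_last : Z q.+1 = 0.
Proof.
have Hb : beta p q != 0 by rewrite gt_eqF ?beta_gt0.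
have Ht : t = alpha p q / beta p q by rewrite /t /theta0 /= !bsum_psum ?(leqW Hpq).
by rewrite /Z -/(alpha p q) -/(beta p q) Ht divfK // subrr.
Qed.

Lemma zval_Z i : (p <= i < q)%N -> zval n y w (p, q) i = Z i.+1.
Proof.
case/andP=> H1 H2; rewrite /zval /= ifN; last by rewrite negb_and (ltn_eqF H2).
by rewrite residual_sum ?(leqW H1) // /Z /alpha /beta; ring.
Qed.

Lemma admissible_of_cut s e : (p <= s)%N -> (s <= e <= q)%N -> Z s <= 0 ->
  (forall c, (s <= c < e)%N -> 0 <= Z c.+1) -> Z e.+1 <= 0 -> admissible s e.
Proof.
move=> Hps /andP[Hse Heq] Zs Zmid Ze c /andP[Hsc Hce].
case: (ltngtP c e) Hce => // [Hlt|->] _; last by rewrite mulrC.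
have alpha_Z k : alpha s k = Z k.+1 - Z s + t * beta s k by rewrite /Z /alpha /beta; ring.
have Zc : 0 <= Z c.+1 by apply: Zmid; rewrite Hsc.
have Bc : 0 <= beta s c by apply: beta_ge0; lia.
have Bce : beta s c <= beta s e by apply: beta_le; lia.
rewrite !alpha_Z; nra.
Qed.

Lemma cutb_ok m s i : (p <= s <= i)%N -> (i + m = q)%N -> Z s <= 0 ->
  (forall c, (s <= c < i)%N -> 0 <= Z c.+1) ->
  valid_from s q.+1 (cutb (fun i => zval n y w (p, q) i < 0) s q (iota i m)) /\
  List.Forall (fun B => admissible B.1 B.2)
    (cutb (fun i => zval n y w (p, q) i < 0) s q (iota i m)).
Proof.
elim: m s i => [|m IH] s i /andP[Hps Hsi] Hiq Zs Zmid /=.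
  rewrite addn0 in Hiq; subst i; rewrite !eqxx Hsi; split => //; constructor => //.
  by apply: admissible_of_cut => //=; rewrite ?Hsi ?Z_last ?leqnn.
have Hiq' : (i.+1 + m = q)%N by rewrite addSnnS.
rewrite zval_Z; last by apply/andP; split; lia.
case: ltrP => Zi.
  have Hpi : (p <= i.+1 <= i.+1)%N by rewrite leqnn andbT; lia.
  have [IH1 IH2] := IH _ _ Hpi Hiq' (ltW Zi) (fun c => ltac:(lia)).
  rewrite /= eqxx Hsi IH1; split => //; constructor => //.
  by apply: admissible_of_cut => //; rewrite ?Hsi ?ltW //=; lia.
apply: IH => //; first by apply/andP; split; lia.
move=> c /andP[Hsc]; rewrite ltnS leq_eqVlt => /orP[/eqP->|Hci] //.
by apply: Zmid; rewrite Hsc.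
Qed.

Lemma cut_block_ok :
  valid_from p q.+1 (cut_block n y w (p, q)) /\
  List.Forall (fun B => admissible B.1 B.2) (cut_block n y w (p, q)).
Proof.
apply: cutb_ok; rewrite ?leqnn ?subnKC //= /Z ?subrr ?mulr0 ?subr0 //.
by move=> c; lia.
Qed.
End Cut.

Lemma J1_ok J0 k : valid_from k n J0 ->
  valid_from k n (J1 n y w J0) /\ List.Forall (fun B => admissible B.1 B.2) (J1 n y w J0).
Proof.
elim: J0 k => [|[p q] J0 IH] k //= /and3P[/eqP-> Hpq Hv].
have [IH1 IH2] := IH _ Hv.
have [C1 C2] := cut_block_ok Hpq (valid_from_le Hv).
by split; [exact: valid_from_cat C1 IH1 | apply/List.Forall_app].
Qed.

Lemma init_blk_ok P k : valid_from k n P -> List.Forall (fun B => admissible B.1 B.2) P ->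
  valid_from k n (parts (map (init_blk y w) P)) /\ List.Forall blk_ok (map (init_blk y w) P).
Proof.
elim: P k => [|[p q] P IH] k //= /and3P[/eqP-> Hpq Hv] /List.Forall_cons_iff[Hg Ho].
have [IH1 IH2] := IH _ Hv Ho.
rewrite eqxx Hpq IH1; split => //; constructor => //.
by split => //=; rewrite bsum_psum // leqW.
Qed.

Lemma theta_of_monotone J k : valid_from k n (parts J) ->
  sorted (fun b c : blk R => mu b <= mu c) J ->
  forall i, (k <= i)%N -> (i.+1 < n)%N -> theta_of J i <= theta_of J i.+1.
Proof.
elim: J k => [|b J IH] k //= /and3P[_ _ Hv] Hs i Hi Hin.
case: (ltngtP i (bq b)) => [Hlt|Hgt|Heq] //.
  by apply: (IH (bq b).+1) => //; exact: path_sorted Hs.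
subst i; case: J {IH} Hv Hs => [|c J] /=; first by move/eqP => Hn; lia.
case/and3P=> /eqP Hc Hcq _ /andP[Hd _].
by rewrite -Hc Hcq.
Qed.

Lemma blk_residual b c : blk_ok b -> (bq b < n)%N -> (bp b <= c <= bq b)%N ->
  0 <= alpha (bp b) c - mu b * beta (bp b) c /\
  (c = bq b -> alpha (bp b) c - mu b * beta (bp b) c = 0).
Proof.
case=> Ha Hb Hg Hn /andP[H1 H2].
have P : 0 < beta (bp b) (bq b) by apply: beta_gt0; lia.
rewrite /mu Ha Hb; split => [|->]; last by rewrite divfK ?subrr // lt0r_neq0.
rewrite subr_ge0 mulrAC ler_pdivrMr // mulrC [X in _ <= X]mulrC mulrC.
by apply: Hg; rewrite H1 H2.
Qed.

(* Complementary slackness: the partial residual sums are the (nonnegative)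
   multipliers of the constraints, and vanish unless the constraint is tight. *)
Lemma residual_prefix J k : valid_from k n (parts J) -> List.Forall blk_ok J ->
  forall m, (k <= m)%N -> (m < n)%N ->
  0 <= \sum_(k <= j < m.+1) w j * (y j - theta_of J j) /\
  (\sum_(k <= j < m.+1) w j * (y j - theta_of J j) = 0 \/
   (m.+1 < n)%N /\ theta_of J m = theta_of J m.+1).
Proof.
elim: J k => [|b J IH] k; first by move=> /= /eqP ->; lia.
rewrite [parts _]/= [valid_from _ _ _]/=.
case/and3P=> /eqP Hk Hpq Hv /List.Forall_cons_iff[Hob Ho] m Hkm Hmn.
have Hqn : (bq b < n)%N by have := valid_from_le Hv; lia.
have Efirst c : (k <= c <= bq b)%N ->
    \sum_(k <= j < c.+1) w j * (y j - theta_of (b :: J) j) = alpha k c - mu b * beta k c.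
  case/andP=> Hc1 Hc2; rewrite -residual_sum; last lia.
  by apply: eq_big_nat => j /andP[_ Hj] /=; rewrite ifT //; lia.
have [Hmq|Hqm] := leqP m (bq b).
  rewrite Efirst ?Hkm //; rewrite -Hk in Efirst *.
  have [O1 O2] := blk_residual Hob Hqn (c := m) (ltac:(lia)).
  split => //; case: (ltngtP m (bq b)) Hmq => // [Hlt|Heq] _; last by left; apply: O2.
  by right; split; [lia | rewrite /= Hlt (ltnW Hlt)].
rewrite (@big_cat_nat _ _ _ (bq b).+1 k m.+1) /=; try lia.
have [_ O2] := blk_residual Hob Hqn (c := bq b) (ltac:(lia)).
rewrite Efirst -?Hk ?O2 ?add0r //; last lia.
have -> : \sum_((bq b).+1 <= j < m.+1) w j * (y j - theta_of (b :: J) j) =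
    \sum_((bq b).+1 <= j < m.+1) w j * (y j - theta_of J j).
  by apply: eq_big_nat => j /andP[Hj _] /=; rewrite ifF //; lia.
have [IH1 IH2] := IH _ Hv Ho m Hqm Hmn.
split => //; case: IH2 => [->|[H1 H2]]; [by left | right; split => //].
by rewrite /= !ifF //; lia.
Qed.

Lemma theta_of_optimal J : pdas_inv J -> forall th, monotone n th ->
  ir_obj n y w (theta_of J) <= ir_obj n y w th.
Proof.
case=> Hv Ho th Hth; set T := theta_of J; set d := fun j => w j * (y j - T j).
have cross : \sum_(i < n) d i * (th i - T i) <= 0.
  case: (posnP n) => [->|n_gt0]; first by rewrite big_ord0.
  have Hlast : (n.-1 < n)%N by rewrite prednK.
  rewrite -(big_mkord xpredT (fun i => d i * (th i - T i))) -(prednK n_gt0).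
  apply: le_trans (abel_summation_le (u := fun j => th j - T j) _) _ => [i Hi|].
    have [D0 Hslack] := residual_prefix Hv Ho (leq0n i) (ltn_trans Hi Hlast).
    split=> //; case: Hslack => [|[Hi1 HT]]; [by left | right].
    by rewrite /T HT lerD2r; apply: Hth.
  have [_ [->|[]]] := residual_prefix Hv Ho (leq0n n.-1) Hlast; first by rewrite mul0r.
  by rewrite prednK // ltnn.
rewrite /ir_obj ler_pM2r ?invr_gt0 ?ltr0n // -subr_ge0 -sumrB.
have : 0 <= \sum_(i < n) - (2 * (d i * (th i - T i))).
  by rewrite sumrN oppr_ge0 -mulr_sumr pmulr_rle0 ?ltr0n.
move/le_trans; apply; apply: ler_sum => i _.
have -> : w i * (y i - th i) ^+ 2 - w i * (y i - T i) ^+ 2 =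
    w i * (th i - T i) ^+ 2 - 2 * (d i * (th i - T i)) by rewrite /d; ring.
have : 0 <= w i * (th i - T i) ^+ 2 by rewrite mulr_ge0 ?sqr_ge0 // ltW ?w_gt0.
lra.
Qed.
End Isotonic.

Theorem theorem3p2 :
  exists C : nat,
  forall (R : realFieldType) (n : nat) (y w : nat -> R) (J0 : seq (nat * nat)),
    (1 <= n)%N ->
    (forall i : nat, (i < n)%N -> 0 < w i) ->
    is_partition n J0 ->
    exists K : nat,
      (forall k : nat, (k < K)%N ->
         parts (pdas_step (Jk n y w J0 k)) <> parts (Jk n y w J0 k)) /\
      parts (pdas_step (Jk n y w J0 K)) = parts (Jk n y w J0 K) /\
      monotone n (theta_of (Jk n y w J0 K)) /\
      (forall th : nat -> R, monotone n th ->
         ir_obj n y w (theta_of (Jk n y w J0 K)) <= ir_obj n y w th) /\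
      (total_cost n y w J0 K <= C * n)%N.
Proof.
exists 17%N => R n y w J0 _ w_gt0 HJ0.
have [V1 A1] := J1_ok y w_gt0 HJ0.
have HJ : pdas_inv n y w (map (init_blk y w) (J1 n y w J0)) by apply: init_blk_ok.
have [K [Hmove Hfix Hcost]] := pdas_terminates (map (init_blk y w) (J1 n y w J0)).
have HK : pdas_inv n y w (Jk n y w J0 K) := pdas_inv_iter w_gt0 K HJ.
have [_ Hsorted] : pdas_step (Jk n y w J0 K) = Jk n y w J0 K /\
    sorted (fun b c : blk R => mu b <= mu c) (Jk n y w J0 K).
  by apply: runs_fixpoint; move: (congr1 size Hfix); rewrite !size_map.
exists K; split => //; split => //; split.
  by move=> i; apply: (theta_of_monotone HK.1 Hsorted).
split; first exact: theta_of_optimal.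
have C1 : (sumn (map cost1_block J0) <= 7 * (n - 0))%N.
  by apply: sumn_valid_from HJ0 => -[p q] _; rewrite /cost1_block /=; lia.
have C3 : (sumn (map cost3_block (J1 n y w J0)) <= 7 * (n - 0))%N.
  by apply: sumn_valid_from V1 => -[p q] _; rewrite /cost3_block /=; lia.
have Cs := size_valid_from V1.
rewrite size_map in Hcost; rewrite /total_cost /Jk; lia.
Qed.
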